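(* Let $\mathrm{Prime}\colon\mathbb{N}\to P(\mathbb{N})$, $\mathrm{Prime}(n)=\{p\mid p \text{ prime},\ \exists k\in\mathbb{N}\colon n=k\cdot p\}$. Then $\mathrm{Wall}_{\aleph_0}(\mathrm{Prime},\mathbb{N})$ equals the family of all $U\subset\mathbb{N}$ such that the set of natural numbers having a prime divisor not in $U$ is finite, and $\mathrm{Wall}_{\aleph_0}(\mathrm{Prime},\mathbb{N})$ is a proper filter on $\mathbb{N}$ but not an ultrafilter.
   Context: $\mathbb{N}=\{0,1,2,\dots\}$. For a multifunction $F\colon X\to P(X)$ and $B\subset X$, $F_{+}(B)=\{x\in X\mid F(x)\subset B\}$, and $\mathrm{Wall}_{\aleph_0}(F,X)=\{U\subset X\mid |X\setminus F_{+}(U)|<\aleph_0\}$. A filter on $X$ is a nonempty family $\Phi\subset P(X)$ with $A,B\in\Phi\iff A\cap B\in\Phi$; it is proper if $\emptyset\notin\Phi$; an ultrafilter is a proper filter such that for every $U\subset X$, $U\in\Phi$ or $X\setminus U\in\Phi$. *)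

From mathcomp Require Import all_boot.
From Stdlib Require Import List.
Set Implicit Arguments.

Definition pset (X : Type) := X -> Prop.

Definition upper_preimage (X : Type) (F : X -> pset X) (B : pset X) : pset X :=
  fun x => forall y, F x y -> B y.

Definition finite_pset (X : Type) (A : pset X) : Prop :=
  exists l : list X, forall x, A x -> In x l.

Definition Wall_aleph0 (X : Type) (F : X -> pset X) : pset (pset X) :=
  fun U => finite_pset (fun x => ~ upper_preimage F U x).

Definition is_filter (X : Type) (Phi : pset (pset X)) : Prop :=
  (exists A, Phi A) /\
  (forall A B : pset X, (Phi A /\ Phi B) <-> Phi (fun x => A x /\ B x)).

Definition is_proper_filter (X : Type) (Phi : pset (pset X)) : Prop :=
  is_filter Phi /\ ~ Phi (fun _ => False).

Definition is_ultrafilter (X : Type) (Phi : pset (pset X)) : Prop :=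
  is_proper_filter Phi /\ (forall U : pset X, Phi U \/ Phi (fun x => ~ U x)).

Definition PrimeMF (n : nat) : pset nat :=
  fun p => prime p /\ exists k : nat, n = k * p.

(* A number n lies outside F_+(U) exactly when some prime divisor of n is
   missing from U.  If U misses a prime q, every multiple of q is such an n,
   so infinitely many are; hence Wall_{aleph_0}(Prime, N) is the principal
   filter of all supersets of the (infinite) set of primes.  It is proper
   because 2 is prime, and it is not an ultrafilter because neither {2} nor
   its complement contains both 2 and 3. *)
From Stdlib Require Import Classical FunctionalExtensionality PropExtensionality.
From mathcomp Require Import all_boot.
Set Implicit Arguments.

Lemma finite_pset_nat_bounded (A : pset nat) :
  finite_pset A -> exists m, forall n, A n -> n <= m.
Proof.
case=> l Al; exists (sumn l) => n /Al {Al}.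
elim: l => [|a l IHl] //= [<-|/IHl n_le]; first exact: leq_addr.
exact: leq_trans n_le (leq_addl a _).
Qed.

Lemma multiples_not_finite q : 0 < q -> ~ finite_pset (fun n => q %| n).
Proof.
move=> q_gt0 /finite_pset_nat_bounded [m multiple_le].
have := multiple_le (q * m.+1) (dvdn_mulr _ (dvdnn q)).
by rewrite leqNgt (leq_trans (ltnSn m)) // leq_pmull.
Qed.

Section SupersetFamily.

Variable X : Type.

Definition supersets (S : pset X) : pset (pset X) :=
  fun U => forall x, S x -> U x.

Lemma supersets_filter (S : pset X) : is_filter (supersets S).
Proof.
split; first by exists (fun _ => True).
move=> A B; split=> [[SA SB] x Sx | SAB]; first by split; [apply: SA | apply: SB].
by split=> x /SAB [].
Qed.

Lemma supersets_proper (S : pset X) x : S x -> is_proper_filter (supersets S).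
Proof. by move=> Sx; split; [apply: supersets_filter | move/(_ x Sx)]. Qed.

Lemma supersets_not_ultrafilter (S : pset X) x y :
  S x -> S y -> x <> y -> ~ is_ultrafilter (supersets S).
Proof.
by move=> Sx Sy neq_xy [_ /(_ (eq x)) [/(_ y Sy) | /(_ x Sx)]].
Qed.

End SupersetFamily.

Definition has_prime_divisor_outside (U : pset nat) (n : nat) : Prop :=
  exists p, prime p /\ (p %| n) /\ ~ U p.

Lemma not_upper_preimage_PrimeMF U n :
  ~ upper_preimage PrimeMF U n <-> has_prime_divisor_outside U n.
Proof.
split=> [not_sub | [p [p_pr [/dvdnP p_dvd_n notUp]]] sub]; last first.
  by apply: notUp; apply: sub.
apply: NNPP => no_divisor; apply: not_sub => p [p_pr /dvdnP p_dvd_n].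
by apply: NNPP => notUp; apply: no_divisor; exists p.
Qed.

Lemma Wall_aleph0_PrimeMF U :
  Wall_aleph0 PrimeMF U <-> finite_pset (has_prime_divisor_outside U).
Proof.
by split=> -[l fin]; exists l => n /not_upper_preimage_PrimeMF; apply: fin.
Qed.

Lemma Wall_aleph0_PrimeMF_supersets :
  Wall_aleph0 PrimeMF = supersets (fun p => prime p).
Proof.
apply: functional_extensionality => U.
apply: propositional_extensionality; rewrite Wall_aleph0_PrimeMF.
split=> [fin p p_pr | primes_in]; last first.
  by exists nil => n [p [p_pr [_ notUp]]]; apply/notUp/primes_in.
apply: NNPP => notUp; apply: (multiples_not_finite _ (prime_gt0 p_pr)).
case: fin => l fin; exists l => n p_dvd_n; apply: fin.
by exists p.
Qed.

Theorem lemma6p16 :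
  (forall U : pset nat,
     Wall_aleph0 PrimeMF U <->
     finite_pset (fun n : nat => exists p : nat, prime p /\ (p %| n) /\ ~ U p)) /\
  is_proper_filter (Wall_aleph0 PrimeMF) /\
  ~ is_ultrafilter (Wall_aleph0 PrimeMF).
Proof.
split; first exact: Wall_aleph0_PrimeMF.
rewrite Wall_aleph0_PrimeMF_supersets; split.
- exact: (@supersets_proper _ _ 2).
- exact: (@supersets_not_ultrafilter _ _ 2 3).
Qed.
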